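(* Let $G$ be a graph that does not belong to $\mathcal{G}^{\rm SSP}$. Then: (1) the tensor product $G\times H$ does not belong to $\mathcal{G}^{\rm SSP}$ for any graph $H$; (2) for every positive integer $m$, the corona graph $G\odot K_{m-1}^c$ does not belong to $\mathcal{G}^{\rm SSP}$.
   Context: All graphs are finite, simple, undirected. For a graph $G$ with vertex set $\{1,\ldots,n\}$, $\mathcal{S}(G)$ is the set of all real symmetric $n\times n$ matrices $A=(a_{ij})$ such that for $i\neq j$, $a_{ij}\neq 0$ if and only if $\{i,j\}$ is an edge of $G$ (diagonal entries are arbitrary). A real symmetric matrix $A$ has the strong spectral property (SSP) if the only real symmetric matrix $X$ with $A\circ X=0$, $I\circ X=0$ and $AX-XA=0$ is $X=0$ (here $\circ$ is the entrywise product). $\mathcal{G}^{\rm SSP}$ is the set of graphs $G$ such that every matrix in $\mathcal{S}(G)$ has the SSP. The tensor product $G\times H$ has vertex set $V(G)\times V(H)$, with $(u,u')$ adjacent to $(v,v')$ iff $\{u,v\}\in E(G)$ and $\{u',v'\}\in E(H)$. $K_{m-1}^c$ is the edgeless graph on $m-1$ vertices. For $V(G)=\{v_1,\ldots,v_n\}$, the corona $G\odot H$ is obtained by taking $G$ and $n$ disjoint copies of $H$ and joining $v_i$ to every vertex of the $i$-th copy of $H$, for each $i$. *)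

From HB Require Import structures.
From mathcomp Require Import all_boot all_order all_algebra.
From Stdlib Require Import Reals.
From mathcomp Require Import Rstruct.
Unset Printing Implicit Defensive.
Import Order.TTheory GRing.Theory Num.Theory.
Local Open Scope ring_scope.

Record graph := Graph {
  vert : finType;
  adj : rel vert;
  adj_sym : symmetric adj;
  adj_irr : irreflexive adj }.

Arguments adj {_} _ _.

(* Matrices associated with G are indexed by 'I_#|vert G|, vertex i being
   enum_val i (a fixed labelling 1..n of the vertices). *)
Definition vx {G : graph} (i : 'I_#|vert G|) : vert G := enum_val i.

Definition inS (G : graph) (A : 'M[R]_#|vert G|) : Prop :=
  A^T = A /\
  forall i j : 'I_#|vert G|, i != j -> (A i j != 0) = adj (vx i) (vx j).



Definition SSP {n : nat} (A : 'M[R]_n) : Prop :=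
  forall X : 'M[R]_n,
    X^T = X ->
    (forall i j, A i j * X i j = 0) ->
    (forall i, X i i = 0) ->
    A *m X - X *m A = 0 ->
    X = 0.

Definition GSSP (G : graph) : Prop :=
  forall A : 'M[R]_#|vert G|, inS G A -> SSP A.

Definition tensor_adj (G H : graph) : rel (vert G * vert H) :=
  fun x y => adj x.1 y.1 && adj x.2 y.2.

Lemma tensor_adj_sym G H : symmetric (tensor_adj G H).
Proof. by move=> x y; rewrite /tensor_adj [adj x.1 _]adj_sym [adj x.2 _]adj_sym. Qed.

Lemma tensor_adj_irr G H : irreflexive (tensor_adj G H).
Proof. by move=> x; rewrite /tensor_adj adj_irr. Qed.

Definition tensor (G H : graph) : graph :=
  Graph (vert G * vert H)%type (tensor_adj G H)
    (tensor_adj_sym G H) (tensor_adj_irr G H).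

Definition edgeless (k : nat) : graph :=
  Graph 'I_k (fun _ _ => false) (fun _ _ => erefl) (fun _ => erefl).

(* Corona G o H: vertices of G (inl v) and, for each v in G, a copy of H
   (inr (v, w)); v is joined to every vertex of its copy. *)
Definition corona_adj (G H : graph) : rel (vert G + (vert G * vert H)) :=
  fun x y =>
    match x, y with
    | inl u, inl v => adj u v
    | inl u, inr (v, _) => u == v
    | inr (u, _), inl v => u == v
    | inr (u, w), inr (v, w') => (u == v) && adj w w'
    end.

Lemma corona_adj_sym G H : symmetric (corona_adj G H).
Proof.
move=> [u|[u w]] [v|[v w']] /=.
- exact: adj_sym.
- by rewrite eq_sym.
- by rewrite eq_sym.
- by rewrite eq_sym adj_sym.
Qed.

Lemma corona_adj_irr G H : irreflexive (corona_adj G H).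
Proof. by move=> [u|[u w]] /=; rewrite adj_irr ?andbF. Qed.

Definition corona (G H : graph) : graph :=
  Graph (vert G + (vert G * vert H))%type (corona_adj G H)
    (corona_adj_sym G H) (corona_adj_irr G H).

(* A graph lies outside G^SSP exactly when some A in S(G) has a nonzero
   symmetric X with zero diagonal, A o X = 0 and AX = XA.  Given such a pair:
   - for G x H, let D be the diagonal of A, M the adjacency matrix of H and
     My = ly (l is real since M is symmetric).  Then (A - D) (x) M + D (x) lI
     lies in S(G x H), and it commutes with X (x) yy^T because M and lI act
     alike on y, so both products reduce to l (AX) (x) yy^T;
   - for G o K_k^c, the matrix [A, I (x) 1^T; I (x) 1, 0] lies in
     S(G o K_k^c) and commutes with X (+) (X (x) I_k). *)

From HB Require Import structures.
From mathcomp Require Import all_boot all_order all_algebra.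
From Stdlib Require Import Reals Classical.
From mathcomp Require Import Rstruct complex spectral ring.
Import GRing.Theory Num.Theory.
Local Open Scope ring_scope.

Definition ssp_violation {n} (A X : 'M[R]_n) : Prop :=
  [/\ X^T = X, forall i j, A i j * X i j = 0, forall i, X i i = 0,
      A *m X = X *m A & X != 0].

Lemma not_SSP_violation {n} (A : 'M[R]_n) :
  ~ SSP A <-> exists X, ssp_violation A X.
Proof.
split=> [nSA | [X [Xs AX Xd AXC /eqP nzX]] SA]; last first.
  by apply/nzX/SA => //; apply/eqP; rewrite subr_eq0 AXC.
apply: NNPP => noX; apply: nSA => X Xs AX Xd /eqP; rewrite subr_eq0 => /eqP C.
by apply: NNPP => /eqP nzX; apply: noX; exists X.
Qed.

Lemma not_GSSP_violation G :
  ~ GSSP G <-> exists A X, inS G A /\ ssp_violation A X.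
Proof.
split=> [nG | [A [X [SA vX]]] HG]; last first.
  by apply/(not_SSP_violation A): (HG A SA); exists X.
apply: NNPP => noAX; apply: nG => A SA; apply: NNPP.
by move=> /not_SSP_violation [X vX]; apply: noAX; exists A, X.
Qed.

Section FunMatrix.
Context {K : pzSemiRingType} {V : finType}.

Definition mx_of_fun (f : V -> V -> K) : 'M[K]_#|V| :=
  \matrix_(i, j) f (enum_val i) (enum_val j).

Definition fun_of_mx (A : 'M[K]_#|V|) : V -> V -> K :=
  fun u v => A (enum_rank u) (enum_rank v).

Lemma fun_of_mxK : cancel fun_of_mx mx_of_fun.
Proof.
by move=> A; apply/matrixP => i j; rewrite !mxE /fun_of_mx !enum_valK.
Qed.

Lemma mx_of_fun_rank f u v : mx_of_fun f (enum_rank u) (enum_rank v) = f u v.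
Proof. by rewrite mxE !enum_rankK. Qed.

Lemma mx_of_funP f g : mx_of_fun f = mx_of_fun g <-> f =2 g.
Proof.
split=> [/matrixP fg u v | fg]; last by apply/matrixP => i j; rewrite !mxE fg.
by have := fg (enum_rank u) (enum_rank v); rewrite !mx_of_fun_rank.
Qed.

Lemma mx_of_fun_eq0 f : mx_of_fun f = 0 <-> f =2 (fun _ _ => 0).
Proof.
have -> : 0 = mx_of_fun (fun _ _ => 0) by apply/matrixP => i j; rewrite !mxE.
exact: mx_of_funP.
Qed.

Lemma trmx_mx_of_fun f : (mx_of_fun f)^T = mx_of_fun (fun u v => f v u).
Proof. by apply/matrixP => i j; rewrite !mxE. Qed.

Lemma mul_mx_of_fun f g :
  mx_of_fun f *m mx_of_fun g = mx_of_fun (fun u w => \sum_z f u z * g z w).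
Proof.
apply/matrixP => i j; rewrite !mxE [RHS](big_enum_val (A := predT)).
by apply: eq_bigr => k _; rewrite !mxE.
Qed.

End FunMatrix.

Record ssp_counterexample (G : graph) (a x : vert G -> vert G -> R) : Prop :=
  SSPCounterexample {
    cex_sym_a : forall u v, a u v = a v u;
    cex_pattern : forall u v, u != v -> (a u v != 0) = adj u v;
    cex_sym_x : forall u v, x u v = x v u;
    cex_hadamard : forall u v, a u v * x u v = 0;
    cex_diag : forall u, x u u = 0;
    cex_comm : forall u w, \sum_z a u z * x z w = \sum_z x u z * a z w;
    cex_nonzero : exists u v, x u v != 0 }.

Lemma counterexample_mx G a x :
  ssp_counterexample G a x <->
  inS G (mx_of_fun a) /\ ssp_violation (mx_of_fun a) (mx_of_fun x).
Proof.
split=> [[As Ap Xs AX Xd C [u0 [v0 nz]]] | [[As Ap] [Xs AX Xd C nzX]]].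
  split; split.
  - by rewrite trmx_mx_of_fun; apply/mx_of_funP => u v; apply: As.
  - by move=> i j ij; rewrite mxE Ap // (inj_eq enum_val_inj).
  - by rewrite trmx_mx_of_fun; apply/mx_of_funP => u v; apply: Xs.
  - by move=> i j; rewrite !mxE AX.
  - by move=> i; rewrite mxE Xd.
  - by rewrite !mul_mx_of_fun; apply/mx_of_funP => u w; apply: C.
  - by apply/eqP => /mx_of_fun_eq0 x0; rewrite x0 eqxx in nz.
split.
- by move: As; rewrite trmx_mx_of_fun => /mx_of_funP As u v; rewrite As.
- move=> u v uv; have := Ap (enum_rank u) (enum_rank v).
  by rewrite mx_of_fun_rank /vx !enum_rankK (inj_eq enum_rank_inj); apply.
- by move: Xs; rewrite trmx_mx_of_fun => /mx_of_funP Xs u v; rewrite Xs.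
- move=> u v; have := AX (enum_rank u) (enum_rank v).
  by rewrite !mx_of_fun_rank.
- by move=> u; have := Xd (enum_rank u); rewrite mx_of_fun_rank.
- by move: C; rewrite !mul_mx_of_fun => /mx_of_funP.
- apply: NNPP => nz; apply/(negP nzX)/eqP/mx_of_fun_eq0 => u v.
  by apply: NNPP => /eqP nzuv; apply: nz; exists u, v.
Qed.

Lemma not_GSSP_counterexample G :
  ~ GSSP G <-> exists a x, ssp_counterexample G a x.
Proof.
rewrite not_GSSP_violation; split=> [[A [X AX]] | [a [x cex]]].
  exists (fun_of_mx A), (fun_of_mx X).
  by apply/counterexample_mx; rewrite !fun_of_mxK.
by exists (mx_of_fun a), (mx_of_fun x); apply/counterexample_mx.
Qed.

Lemma sum_delta_l {S : pzSemiRingType} {T : finType} (t : T) (F : T -> S) :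
  \sum_z (t == z)%:R * F z = F t.
Proof.
rewrite (bigD1 t) //= eqxx mul1r big1 ?addr0 // => z /negbTE zt.
by rewrite eq_sym zt mul0r.
Qed.

Lemma sum_delta_r {S : pzSemiRingType} {T : finType} (t : T) (F : T -> S) :
  \sum_z F z * (z == t)%:R = F t.
Proof.
rewrite (bigD1 t) //= eqxx mulr1 big1 ?addr0 // => z /negbTE ->.
by rewrite mulr0.
Qed.

Lemma sum_pair {S : nmodType} {T1 T2 : finType} (F : T1 * T2 -> S) :
  \sum_p F p = \sum_w \sum_h F (w, h).
Proof. by rewrite pair_bigA; apply: eq_bigr => -[]. Qed.

Section Corona.
Context {G : graph} {k : nat} {a x : vert G -> vert G -> R}.
Hypothesis cex : ssp_counterexample G a x.
Local Notation V' := (vert (corona G (edgeless k))).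

Definition corona_a (p q : V') :=
  match p, q with
  | inl u, inl v => a u v
  | inl u, inr t => (u == t.1)%:R
  | inr s, inl v => (s.1 == v)%:R
  | inr _, inr _ => 0
  end.

Definition corona_x (p q : V') :=
  match p, q with
  | inl u, inl v => x u v
  | inr s, inr t => x s.1 t.1 * (s.2 == t.2)%:R
  | _, _ => 0
  end.

Lemma corona_counterexample :
  ssp_counterexample (corona G (edgeless k)) corona_a corona_x.
Proof.
case: cex => As Ap Xs AX Xd C [u0 [v0 nz]]; split.
- by case=> [u|[u i]] [v|[v j]] //=; rewrite 1?As // eq_sym.
- case=> [u|[u i]] [v|[v j]] //= uv.
  + by rewrite Ap //; apply: contra uv => /eqP ->.
  + by rewrite pnatr_eq0 eqb0 negbK.
  + by rewrite pnatr_eq0 eqb0 negbK.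
  + by rewrite eqxx andbF.
- by case=> [u|[u i]] [v|[v j]] //=; rewrite Xs eq_sym.
- by case=> [u|[u i]] [v|[v j]] //=; rewrite ?mulr0 ?mul0r.
- by case=> [u|[u i]] /=; rewrite Xd ?mul0r.
- case=> [u|[u i]] [v|[v j]]; rewrite !big_sumType /=.
  + by rewrite C; congr (_ + _); rewrite !big1 // => *; rewrite ?mulr0 ?mul0r.
  + rewrite big1 ?add0r => [|z _]; last by rewrite mulr0.
    rewrite [X in _ = _ + X]big1 ?addr0 => [|p _]; last by rewrite mulr0.
    rewrite sum_delta_r sum_pair /=.
    under eq_bigr => w _ do rewrite -big_distrr /= sum_delta_r.
    by rewrite sum_delta_l.
  + rewrite [X in _ + X = _]big1 ?addr0 => [|p _]; last by rewrite mul0r.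
    rewrite [X in _ = X + _]big1 ?add0r => [|z _]; last by rewrite mul0r.
    rewrite sum_delta_l sum_pair /=.
    under eq_bigr => w _ do
      rewrite -big_distrl /= (eq_bigr _ (fun h _ => mulrC _ _)) sum_delta_l.
    by rewrite sum_delta_r.
  + by rewrite !big1 // => *; rewrite ?mulr0 ?mul0r.
- by exists (inl u0), (inl v0).
Qed.
End Corona.

Lemma symmetric_eigenvector {F : rcfType} {n} (M : 'M[F]_n) :
  (0 < n)%nat -> M^T = M -> exists l (r : 'rV_n), r *m M = l *: r /\ r != 0.
Proof.
move=> n_gt0 Ms.
pose Mc := map_mx (real_complex F) M.
have Mc_real : Mc \is a realmx.
  by apply/mxOverP => i j; rewrite mxE complex_real.
have Mc_sym : Mc \is symmetricmx.
  by apply/is_hermitianmxP; rewrite expr0 scale1r map_mx_id // /Mc map_trmx Ms.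
have Mc_herm := realsym_hermsym Mc_sym Mc_real.
have /orthomx_spectralP Mc_diag := hermitian_normalmx Mc_herm.
set P := spectralmx Mc in Mc_diag; set d := spectral_diag Mc in Mc_diag.
pose i := Ordinal n_gt0.
have : eigenvalue Mc (d 0 i).
  apply/eigenvalueP; exists ('e_i *m P).
    rewrite Mc_diag !mulmxA mulmxK ?spectral_unit //.
    by rewrite -(rowE i (diag_mx d)) row_diag_mx -scalemxAl.
  rewrite mulmx_free_eq0 ?row_free_unit ?spectral_unit //.
  by apply/eqP => /matrixP /(_ 0 i) /eqP; rewrite !mxE !eqxx oner_eq0.
have /complex_realP [l ->] : d 0 i \is Num.real.
  exact: mxOverP (hermitian_spectral_diag_real Mc_herm) _ _.
rewrite eigenvalue_root_char /Mc -map_char_poly fmorph_root.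
rewrite -eigenvalue_root_char.
by case/eigenvalueP => r Mr r_neq0; exists l, r.
Qed.

Definition adjacency (H : graph) : vert H -> vert H -> R :=
  fun c d => (adj c d)%:R.

Lemma adjacency_sym H c d : adjacency H c d = adjacency H d c.
Proof. by rewrite /adjacency adj_sym. Qed.

Lemma adjacency_neq0 H c d : (adjacency H c d != 0) = adj c d.
Proof. by rewrite /adjacency pnatr_eq0 eqb0 negbK. Qed.

Lemma adjacency_eigenvector H : (0 < #|vert H|)%nat ->
  exists l y, (forall c, \sum_d adjacency H c d * y d = l * y c) /\
              exists c, y c != 0.
Proof.
move=> H_gt0; pose M := mx_of_fun (adjacency H).
have Ms : M^T = M.
  by rewrite trmx_mx_of_fun; apply/mx_of_funP => c d; apply: adjacency_sym.
have [l [r [Mr r_neq0]]] := symmetric_eigenvector M H_gt0 Ms.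
exists l, (fun d => r 0 (enum_rank d)); split=> [c | ].
  have := congr1 (fun N : 'rV_#|vert H| => N 0 (enum_rank c)) Mr.
  rewrite !mxE => <-; rewrite (big_enum_val (A := predT)).
  apply: eq_bigr => k _.
  by rewrite enum_valK mxE enum_rankK adjacency_sym mulrC.
apply: NNPP => y0; move/eqP: r_neq0; apply; apply/matrixP => i j.
rewrite ord1 mxE -(enum_valK j); apply: NNPP => /eqP nz; apply: y0.
by exists (enum_val j).
Qed.

Section TensorProduct.
Context {G H : graph} {a x : vert G -> vert G -> R}.
Context {m : vert H -> vert H -> R} {l : R} {y : vert H -> R}.
Hypotheses (cex : ssp_counterexample G a x)
  (m_sym : forall c d, m c d = m d c)
  (m_neq0 : forall c d, (m c d != 0) = adj c d)
  (m_eigen : forall c, \sum_d m c d * y d = l * y c)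
  (y_neq0 : exists c, y c != 0).
Local Notation VW := (vert (tensor G H)).

Definition tensor_block (diag : bool) : vert H -> vert H -> R :=
  fun c d => if diag then (c == d)%:R * l else m c d.

Lemma tensor_block_sym b c d : tensor_block b c d = tensor_block b d c.
Proof. by case: b; rewrite /tensor_block; [rewrite eq_sym | apply: m_sym]. Qed.

Lemma tensor_block_eigen b c : \sum_d tensor_block b c d * y d = l * y c.
Proof.
case: b => //=; rewrite -[RHS](sum_delta_l c (fun d => l * y d)).
by apply: eq_bigr => d _; rewrite mulrA.
Qed.

Definition tensor_a : VW -> VW -> R :=
  fun p q => a p.1 q.1 * tensor_block (p.1 == q.1) p.2 q.2.

Definition tensor_x : VW -> VW -> R :=
  fun p q => x p.1 q.1 * (y p.2 * y q.2).

Lemma tensor_counterexample : ssp_counterexample (tensor G H) tensor_a tensor_x.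
Proof.
case: cex => As Ap Xs AX Xd C [u0 [v0 nz]]; split.
- by move=> [u u'] [v v']; rewrite /tensor_a /= As eq_sym tensor_block_sym.
- move=> [u u'] [v v']; rewrite /tensor_a /tensor_adj /=.
  case: (eqVneq u v) => [<- | /negbTE neq_uv _].
    rewrite xpair_eqE eqxx /= => /negbTE neq_u'v'.
    by rewrite /tensor_adj /= adj_irr neq_u'v' mul0r mulr0 eqxx.
  by rewrite /tensor_adj /= mulf_eq0 negb_or m_neq0 Ap // neq_uv.
- by move=> [u u'] [v v']; rewrite /tensor_x /= Xs [y u' * _]mulrC.
- by move=> [u u'] [v v']; rewrite /tensor_a /tensor_x /= mulrACA AX mul0r.
- by move=> [u u']; rewrite /tensor_x /= Xd mul0r.
- move=> [u u'] [v v']; rewrite !sum_pair /=.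
  have row w : \sum_w' tensor_a (u, u') (w, w') * tensor_x (w, w') (v, v') =
               a u w * x w v * (l * y u' * y v').
    rewrite -(tensor_block_eigen (u == w)) big_distrl big_distrr /=.
    apply: eq_bigr => w' _.
    by rewrite /tensor_a /tensor_x /=; ring.
  have col w : \sum_w' tensor_x (u, u') (w, w') * tensor_a (w, w') (v, v') =
               x u w * a w v * (l * y u' * y v').
    rewrite [l * _ * _]mulrAC -(tensor_block_eigen (w == v) v').
    rewrite big_distrl big_distrr /=.
    apply: eq_bigr => w' _.
    by rewrite /tensor_a /tensor_x /= tensor_block_sym; ring.
  under eq_bigr do rewrite row.
  under [RHS]eq_bigr do rewrite col.
  by rewrite -!big_distrl /= C.
- case: y_neq0 => c yc; exists (u0, c), (v0, c).
  by rewrite /tensor_x /= !mulf_neq0.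
Qed.

End TensorProduct.

(* With Reals loaded, %N no longer denotes nat_scope, so the statement below
   must be read outside ring_scope. *)
Local Close Scope ring_scope.

Theorem corollary2p3 (G : graph) :
  ~ GSSP G ->
  (forall H : graph, (0 < #|vert H|)%N -> ~ GSSP (tensor G H)) /\
  (forall m : nat, (0 < m)%N -> ~ GSSP (corona G (edgeless m.-1))).
Proof.
move=> /not_GSSP_counterexample [a [x cex]].
split=> [H H_gt0 | m _].
  have [l [y [y_eigen y_neq0]]] := adjacency_eigenvector H H_gt0.
  apply/not_GSSP_counterexample; do 2 eexists.
  exact: tensor_counterexample cex (adjacency_sym H) (adjacency_neq0 H)
                               y_eigen y_neq0.
apply/not_GSSP_counterexample; do 2 eexists.
exact: corona_counterexample cex.
Qed.
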